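(* Let $Q=(E_0,E_1,\mathbf U,\boldsymbol\alpha)$ be a quiver representation over $\mathbb{F}_q$, let $a,b\in E_0$, let $Q'=\Omega(Q,a,b)$ and $\pi=\pi^{Q'}_Q$. Let $\mathbf X\in\operatorname{End}(Q)$ and let $H$ be a subgroup of $\operatorname{Aut}(Q)$ fixing $\mathbf X$ under conjugation. Then $$\gamma\big(H^{Q'},\pi^{-1}(\mathbf X)\big)=\gamma\big(H,\mathcal I(X_a,X_b)\big),$$ where $H^{Q'}$ acts on $\pi^{-1}(\mathbf X)\subseteq\operatorname{End}(Q')$ by conjugation and $H$ acts on $\mathcal I(X_a,X_b)$ by $\mathbf g\cdot R=g_bRg_a^{-1}$.
   Context: $\gamma(G,X)$ is the number of orbits of a group $G$ on a finite set $X$. A quiver representation $Q=(E_0,E_1,\mathbf U,\boldsymbol\alpha)$: finite sets $E_0$ (vertices), $E_1$ (arrows), source/target maps $\sigma,\tau:E_1\to E_0$, finite-dimensional spaces $U_c$ ($c\in E_0$), linear maps $\alpha_e:U_{\sigma(e)}\to U_{\tau(e)}$. $\operatorname{End}(Q)$ is the ring of tuples $(X_c)_{c\in E_0}$, $X_c\in\operatorname{End}(U_c)$, with $\alpha_eX_{\sigma(e)}=X_{\tau(e)}\alpha_e$ for all $e$; $\operatorname{Aut}(Q)$ is its unit group, acting on $\operatorname{End}(Q)$ by componentwise conjugation. $Q'$ is an extension of $Q$ if its vertex set contains $E_0$, its spaces at $E_0$ coincide with those of $Q$, and restriction of any endomorphism of $Q'$ to $E_0$ is an endomorphism of $Q$;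 then $\pi^{Q'}_Q$ is this restriction map, and for $H\le\operatorname{Aut}(Q)$, $H^{Q'}=\pi^{-1}(H)\cap\operatorname{Aut}(Q')$. $\Omega(Q,a,b)$ is the extension obtained from $Q$ by adding a new vertex $c$ with a space $U'_c$ of dimension $\dim U_a+\dim U_b$ and two arrows $e_1:a\to c$, $e_2:c\to b$ whose maps form a short exact sequence $0\to U_a\to U'_c\to U_b\to 0$ (first injective, second surjective, image of first = kernel of second). $\mathcal I(X_a,X_b)=\{S\in\operatorname{Hom}(U_a,U_b):SX_a=X_bS\}$. *)

From HB Require Import structures.
From mathcomp Require Import all_boot all_order all_algebra.
Set Implicit Arguments. Unset Strict Implicit. Unset Printing Implicit Defensive.
Import GRing.Theory.
Local Open Scope ring_scope.

(* Convention: linear maps U -> V with dim U = m, dim V = n are matrices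
   'M_(m, n) acting on ROW vectors (v |-> v *m A).  Hence the composite
   f o g is represented by (matrix of g) *m (matrix of f). *)

Record quiverRep (F : finFieldType) := QuiverRep {
  qV : finType;
  qA : finType;
  qsrc : qA -> qV;
  qtgt : qA -> qV;
  qdim : qV -> nat;
  qmap : forall e : qA, 'M[F]_(qdim (qsrc e), qdim (qtgt e))
}.

Definition tupleT (F : finFieldType) (Q : quiverRep F) :=
  {dffun forall c : qV Q, 'M[F]_(@qdim _ Q c)}.

Section Ops.
Variables (F : finFieldType) (Q : quiverRep F).

Definition isEnd (X : tupleT Q) : bool :=
  [forall e : qA Q, X (qsrc e) *m qmap e == qmap e *m X (qtgt e)].

Definition EndQ : {set tupleT Q} := [set X | isEnd X].

Definition oneT : tupleT Q := [ffun c => 1%:M].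
Definition mulT (g h : tupleT Q) : tupleT Q := [ffun c => h c *m g c].
Definition invT (g : tupleT Q) : tupleT Q := [ffun c => invmx (g c)].

Definition AutQ : {set tupleT Q} :=
  [set X in EndQ | [exists Y in EndQ, (mulT X Y == oneT) && (mulT Y X == oneT)]].

Definition conjT (g Y : tupleT Q) : tupleT Q :=
  [ffun c => invmx (g c) *m Y c *m g c].

Definition isSubgroupAut (H : {set tupleT Q}) : Prop :=
  [/\ H \subset AutQ, oneT \in H,
      (forall g h, g \in H -> h \in H -> mulT g h \in H) &
      (forall g, g \in H -> invT g \in H)].

Definition Iset (X : tupleT Q) (a b : qV Q) : {set 'M[F]_(@qdim _ Q a, @qdim _ Q b)} :=
  [set S | X a *m S == S *m X b].

Definition actI (a b : qV Q) (g : tupleT Q) (R : 'M[F]_(@qdim _ Q a, @qdim _ Q b)) :=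
  invmx (g a) *m R *m g b.

End Ops.

Definition norbits (gT T : finType) (G : {set gT}) (act : gT -> T -> T)
  (S : {set T}) : nat :=
  #|[set [set act g x | g in G] | x in S]|.

(* Omega(Q, a, b): add vertex c (= None) with space of dim dim U_a + dim U_b,
   arrows e_1 : a -> c (matrix i) and e_2 : c -> b (matrix p). *)
Section Omega.
Variables (F : finFieldType) (Q : quiverRep F) (a b : qV Q).

Definition om_dim (o : option (qV Q)) : nat :=
  match o with Some c => @qdim _ Q c | None => (@qdim _ Q a + @qdim _ Q b)%N end.
Definition om_src (e : (qA Q + bool)%type) : option (qV Q) :=
  match e with inl e1 => Some (qsrc e1) | inr true => Some a | inr false => None end.
Definition om_tgt (e : (qA Q + bool)%type) : option (qV Q) :=
  match e with inl e1 => Some (qtgt e1) | inr true => None | inr false => Some b end.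

Variables (i : 'M[F]_(@qdim _ Q a, @qdim _ Q a + @qdim _ Q b))
          (p : 'M[F]_(@qdim _ Q a + @qdim _ Q b, @qdim _ Q b)).

Definition om_map (e : (qA Q + bool)%type) : 'M[F]_(om_dim (om_src e), om_dim (om_tgt e)) :=
  match e as e0 return 'M[F]_(om_dim (om_src e0), om_dim (om_tgt e0)) with
  | inl e1 => qmap e1
  | inr bb => if bb as b0 return 'M[F]_(om_dim (om_src (inr b0)), om_dim (om_tgt (inr b0)))
              then i else p
  end.

Definition Omega : quiverRep F :=
  @QuiverRep F (option (qV Q)) (qA Q + bool)%type om_src om_tgt om_dim om_map.

Definition piOm (Y : tupleT Omega) : tupleT Q := [ffun c => Y (Some c)].

Definition liftGroup (H : {set tupleT Q}) : {set tupleT Omega} :=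
  [set g in AutQ Omega | piOm g \in H].

Definition fibre (X : tupleT Q) : {set tupleT Omega} :=
  [set Y in EndQ Omega | piOm Y == X].

End Omega.

From HB Require Import structures.
From mathcomp Require Import all_boot all_order all_algebra.
From mathcomp Require Import zify.
Set Implicit Arguments. Unset Strict Implicit. Unset Printing Implicit Defensive.
Import GRing.Theory.

(* A splitting (r, s) of the sequence (ses_split) gives block coordinates on
   the endomorphisms of W preserving i(U_a): they are the blocks
   [[A, 0], [B, D]] (blockEnd). Hence H^{Q'} is in bijection with
   H x Hom(U_b, U_a) via (h, K) |-> liftAut h K, and pi^{-1}(X) with
   Hom(U_b, U_a) via C |-> liftEnd C. As h fixes X, liftAut h K fixes
   liftEnd C iff X_b K - K X_a = h_b C - C h_a. For fixed h such pairs (K, C)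
   are the coincidences of two Sylvester operators; counting kernels over F_q
   and dualising with the trace form shows there are q^{dim Hom(U_b, U_a)}
   times as many of them as h-fixed points of I(X_a, X_b). Burnside's lemma
   for both actions and |H^{Q'}| = |H| q^{dim Hom(U_b, U_a)} then identify the
   two orbit counts (norbits_lift); the theorem only has to split the sequence. *)

Section Burnside.
Variables (gT T : finType) (G : {set gT}) (mul : gT -> gT -> gT) (inv : gT -> gT)
  (one : gT) (act : gT -> T -> T) (S : {set T}).
Hypotheses (G1 : one \in G) (GM : forall g h, g \in G -> h \in G -> mul g h \in G)
  (GV : forall g, g \in G -> inv g \in G)
  (mulA : forall g h k, g \in G -> h \in G -> k \in G -> mul g (mul h k) = mul (mul g h) k)
  (mul1g : forall g, g \in G -> mul one g = g)
  (mulVg : forall g, g \in G -> mul (inv g) g = one)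
  (mulgV : forall g, g \in G -> mul g (inv g) = one)
  (actM : forall g h x, g \in G -> h \in G -> x \in S -> act (mul g h) x = act g (act h x))
  (act1 : forall x, x \in S -> act one x = x)
  (actS : forall g x, g \in G -> x \in S -> act g x \in S).

Let orbit x := [set act g x | g in G].
Let stab x := [set g in G | act g x == x].

Lemma orbit_refl x : x \in S -> x \in orbit x.
Proof. by move=> xS; apply/imsetP; exists one; rewrite ?act1. Qed.

Lemma orbit_eq x y : x \in S -> y \in orbit x -> orbit y = orbit x.
Proof.
move=> xS /imsetP[g0 g0G ->]; apply/setP=> z.
apply/imsetP/imsetP=> [[g gG ->]|[g gG ->]].
  by exists (mul g g0); [exact: GM | rewrite actM].
exists (mul g (inv g0)); first by apply: GM => //; apply: GV.
by rewrite actM ?GV ?actS // -(actM (GV g0G)) // mulVg // act1.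
Qed.

(* The orbit-stabiliser theorem: left translation by g0 maps the stabiliser
   of x onto the set of group elements sending x to act g0 x. *)
Lemma orbit_stabiliser x : x \in S -> (#|stab x| * #|orbit x| = #|G|)%N.
Proof.
move=> xS; symmetry; rewrite -sum1_card (partition_big_imset (fun g => act g x)) /=.
rewrite mulnC -sum_nat_const; apply: eq_bigr => _ /imsetP[g0 g0G ->].
rewrite sum1dep_card.
have inj_g0 : {in stab x &, injective (mul g0)}.
  move=> h h' /setIdP[hG _] /setIdP[h'G _] e.
  by rewrite -(mul1g hG) -(mul1g h'G) -(mulVg g0G) -!mulA ?GV // e.
have im_g0 : mul g0 @: stab x = [set g in G | act g x == act g0 x].
  apply/setP=> g; apply/imsetP/setIdP=> [[h /setIdP[hG /eqP hx] ->]|[gG /eqP gx]].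
    by split; [exact: GM | rewrite actM // hx].
  exists (mul (inv g0) g); last by rewrite mulA ?GV // mulgV // mul1g.
  by rewrite inE GM ?GV //= actM ?GV // gx -actM ?GV // mulVg // act1.
by rewrite -(card_in_imset inj_g0) im_g0; apply: eq_card => g; rewrite inE.
Qed.

Lemma burnside :
  (norbits G act S * #|G| = \sum_(g in G) #|[set x in S | act g x == x]|)%N.
Proof.
have -> : \sum_(g in G) #|[set x in S | act g x == x]| = \sum_(x in S) #|stab x|.
  have card_sep (U : finType) (P : {pred U}) (Q : pred U) :
      #|[set u in P | Q u]| = \sum_(u in P) (Q u : nat).
    rewrite -sum1_card big_mkcond [RHS]big_mkcond /=.
    by apply: eq_bigr => u _; rewrite inE; case: (u \in P).
  rewrite (eq_bigr _ (fun g _ => card_sep _ _ _)) exchange_big /=.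
  by apply: eq_bigr => x _; rewrite card_sep.
rewrite (partition_big_imset orbit) /= -sum_nat_const.
apply: eq_bigr => _ /imsetP[x0 x0S ->].
have orbit_gt0 x : x \in S -> (0 < #|orbit x|)%N.
  by move=> xS; apply/card_gt0P; exists x; exact: orbit_refl.
transitivity (\sum_(x in orbit x0) (#|G| %/ #|orbit x0|)).
  by rewrite sum_nat_const -(orbit_stabiliser x0S) mulnK ?orbit_gt0 // mulnC.
symmetry; apply: eq_big => [x|x /andP[xS /eqP ox]].
  apply/andP/idP=> [[xS /eqP ox]|xo]; first by have := orbit_refl xS; rewrite ox.
  have xS : x \in S by case/imsetP: xo => g gG ->; exact: actS.
  by rewrite xS (orbit_eq x0S xo).
have -> : orbit x0 = orbit x by exact: esym ox.
by rewrite -(orbit_stabiliser xS) mulnK ?orbit_gt0.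
Qed.
End Burnside.

Local Open Scope ring_scope.

Lemma card_bij_pred (T1 T2 : finType) (f : T1 -> T2) (P : pred T2) :
  bijective f -> #|[set y | P y]| = #|[set x | P (f x)]|.
Proof.
move=> f_bij; rewrite -(card_imset _ (bij_inj f_bij)); apply: eq_card => y.
rewrite inE; apply/idP/imsetP=> [Py|[x]]; last by rewrite inE => ? ->.
by case: f_bij => g fgK gfK; exists (g y); rewrite ?inE gfK.
Qed.

Lemma card_pairs (T1 T2 : finType) (P : T1 -> T2 -> bool) :
  #|[set x : T1 * T2 | P x.1 x.2]| = (\sum_(k : T1) #|[set c | P k c]|)%N.
Proof.
rewrite -sum1_card (eq_bigl (fun x : T1 * T2 => P x.1 x.2)) => [|x]; last by rewrite inE.
rewrite big_mkcond /= -(pair_bigA _ (fun k c => if P k c then 1%N else 0%N)) /=.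
apply: eq_bigr => k _; rewrite -sum1_card big_mkcond [RHS]big_mkcond /=.
by apply: eq_bigr => c _; rewrite inE.
Qed.

Section LinearCounting.
Variable F : finFieldType.

Lemma card_rowspace m n (B : 'M[F]_(m, n)) :
  #|[set v : 'rV[F]_n | (v <= B)%MS]| = (#|F| ^ \rank B)%N.
Proof.
have -> : [set v : 'rV[F]_n | (v <= B)%MS] = [set u *m row_base B | u : 'rV_(\rank B)].
  apply/setP=> v; rewrite inE -(eq_row_base B).
  by apply/idP/imsetP=> [/submxP[u ->]|[u _ ->]]; [exists u | exact: submxMl].
by rewrite card_imset ?card_mx ?mul1n //; exact: row_free_inj (row_base_free B).
Qed.

Lemma card_kernel m n (A : 'M[F]_(m, n)) :
  #|[set v : 'rV[F]_m | v *m A == 0]| = (#|F| ^ (m - \rank A))%N.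
Proof.
rewrite -mxrank_ker -card_rowspace; apply: eq_card => v.
by rewrite !inE sub_kermx.
Qed.

(* Rank-nullity for A : F^m -> F^n and its transpose, which has the same rank. *)
Lemma card_kernel_tr m n (A : 'M[F]_(m, n)) :
  (#|[set v : 'rV_m | v *m A == 0%R]| * #|F| ^ n
   = #|[set u : 'rV_n | u *m A^T == 0%R]| * #|F| ^ m)%N.
Proof.
rewrite !card_kernel mxrank_tr -!expnD; congr (_ ^ _)%N.
have := rank_leq_row A; have := rank_leq_col A; lia.
Qed.

Lemma card_coincidences m1 m2 n (L1 : 'M[F]_(m1, n)) (L2 : 'M[F]_(m2, n)) :
  (#|[set x : 'rV[F]_m1 * 'rV[F]_m2 | x.1 *m L1 == x.2 *m L2]| * #|F| ^ n
   = #|[set u : 'rV[F]_n | (u *m L1^T == 0%R) && (u *m L2^T == 0%R)]| * #|F| ^ (m1 + m2))%N.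
Proof.
pose A := col_mx L1 (- L2).
have pair_bij : bijective (fun v : 'rV[F]_(m1 + m2) => (lsubmx v, rsubmx v)).
  exists (fun x : 'rV[F]_m1 * 'rV[F]_m2 => row_mx x.1 x.2) => [v | [x y]].
    by rewrite hsubmxK.
  by rewrite row_mxKl row_mxKr.
rewrite (card_bij_pred (fun x : 'rV[F]_m1 * 'rV[F]_m2 => x.1 *m L1 == x.2 *m L2) pair_bij) /=.
have -> : [set v : 'rV[F]_(m1 + m2) | lsubmx v *m L1 == rsubmx v *m L2]
    = [set v | v *m A == 0].
  apply/setP=> v; rewrite !inE /A -[in RHS](hsubmxK v) mul_row_col.
  by rewrite mulmxN subr_eq0.
have -> : [set u : 'rV[F]_n | u *m L1^T == 0 & u *m L2^T == 0]
    = [set u | u *m A^T == 0].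
  apply/setP=> u; rewrite !inE /A tr_col_mx mul_mx_row row_mx_eq0.
  by rewrite linearN /= mulmxN oppr_eq0.
by rewrite (card_kernel_tr A).
Qed.
End LinearCounting.

Section TraceForm.
Variable F : fieldType.

Lemma mxvec_dot m n (P Z : 'M[F]_(m, n)) :
  (mxvec P *m (mxvec Z)^T) 0 0 = \tr (P *m Z^T).
Proof.
rewrite mxE (reindex _ (curry_mxvec_bij m n)) /mxtrace.
under [RHS]eq_bigr do rewrite mxE.
rewrite pair_bigA; apply: eq_bigr => -[i j] _ /=.
by rewrite !mxE mxvecE -[mxvec Z _ _]/(mxvec Z 0 (mxvec_index i j)) mxvecE.
Qed.

Lemma trace_form_nondeg m n (Y : 'M[F]_(m, n)) :
  (forall K : 'M[F]_(n, m), \tr (K *m Y) = 0) -> Y = 0.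
Proof.
move=> trKY0; apply/matrixP=> i j; rewrite mxE; have := trKY0 (delta_mx j i).
rewrite -(mul_delta_mx (0 : 'I_1)) -mulmxA -rowE mxtrace_mulC -colE.
by rewrite /mxtrace big_ord1 !mxE.
Qed.

Lemma ker_trP k n (A : 'M[F]_(k, n)) (u : 'rV[F]_n) :
  reflect (forall v : 'rV[F]_k, (v *m A *m u^T) 0 0 = 0) (u *m A^T == 0).
Proof.
apply: (iffP eqP) => [uA0 v|orth].
  by rewrite -mulmxA -[A]trmxK -trmx_mul uA0 trmx0 mulmx0 mxE.
apply: trmx_inj; rewrite trmx_mul trmxK trmx0; apply/colP=> j.
by have := orth (delta_mx 0 j); rewrite -rowE -row_mul mxE => ->; rewrite mxE.
Qed.

(* The matrix of the Sylvester operator K |-> P K - K R on 'M_(m, n),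
   acting on flattened matrices. *)
Definition sylvester m n (P : 'M[F]_m) (R : 'M[F]_n) : 'M[F]_(m * n) :=
  lin_mx (mulmx P : 'M[F]_(m, n) -> 'M[F]_(m, n)) - lin_mx (mulmxr R).

Lemma sylvesterE m n (P : 'M[F]_m) (R : 'M[F]_n) K :
  mxvec K *m sylvester P R = mxvec (P *m K - K *m R).
Proof. by rewrite mulmxBr !mul_vec_lin linearB. Qed.

(* With respect to the trace form, the adjoint of K |-> P K - K R is
   S |-> S P - R S; hence the kernel of the transposed Sylvester matrix
   consists of the intertwiners S with S P = R S. *)
Lemma sylvester_tr_ker m n (P : 'M[F]_m) (R : 'M[F]_n) (S : 'M[F]_(n, m)) :
  (mxvec S^T *m (sylvester P R)^T == 0) = (S *m P == R *m S).
Proof.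
have adjoint K : (mxvec K *m sylvester P R *m (mxvec S^T)^T) 0 0
                 = \tr (K *m (S *m P - R *m S)).
  rewrite sylvesterE mxvec_dot trmxK mulmxBl mulmxBr !raddfB /= -mulmxA.
  by rewrite mxtrace_mulC -!mulmxA.
rewrite -[S *m P == _]subr_eq0; apply/ker_trP/eqP=> [orth|intertw v].
  by apply: trace_form_nondeg => K; rewrite -adjoint.
by rewrite -(vec_mxK v) adjoint intertw mulmx0 mxtrace0.
Qed.
End TraceForm.

Lemma invmx_eq (F : fieldType) n (A B : 'M[F]_n) : A *m B = 1%:M -> invmx A = B.
Proof.
by move=> AB; have [Au _] := mulmx1_unit AB; rewrite -[B](mulKmx Au) AB mulmx1.
Qed.

Section QuiverGroup.
Variables (F : finFieldType) (Q : quiverRep F).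
Implicit Types g h X Y : tupleT Q.

Lemma mulT_end X Y : X \in EndQ Q -> Y \in EndQ Q -> mulT X Y \in EndQ Q.
Proof.
rewrite !inE => /forallP endX /forallP endY; apply/forallP=> e; rewrite !ffunE.
by rewrite -mulmxA (eqP (endX e)) mulmxA (eqP (endY e)) mulmxA.
Qed.

Lemma oneT_end : oneT Q \in EndQ Q.
Proof. by rewrite inE; apply/forallP=> e; rewrite !ffunE mul1mx mulmx1. Qed.

Lemma mulTA g h X : mulT g (mulT h X) = mulT (mulT g h) X.
Proof. by apply/ffunP=> c; rewrite !ffunE mulmxA. Qed.

Lemma mul1T g : mulT (oneT Q) g = g.
Proof. by apply/ffunP=> c; rewrite !ffunE mulmx1. Qed.

Lemma mulVT g : (forall c, g c \in unitmx) -> mulT (invT g) g = oneT Q.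
Proof. by move=> gU; apply/ffunP=> c; rewrite !ffunE mulmxV. Qed.

Lemma mulTV g : (forall c, g c \in unitmx) -> mulT g (invT g) = oneT Q.
Proof. by move=> gU; apply/ffunP=> c; rewrite !ffunE mulVmx. Qed.

Lemma autQP g : g \in AutQ Q ->
  [/\ g \in EndQ Q, invT g \in EndQ Q & forall c, g c \in unitmx].
Proof.
case/setIdP=> gE /existsP[Y /andP[YE /andP[/eqP gY _]]].
have Yg c : Y c *m g c = 1%:M.
  by have := congr1 (fun t : tupleT Q => t c) gY; rewrite !ffunE.
have gU c : g c \in unitmx by case: (mulmx1_unit (Yg c)).
suff -> : invT g = Y by [].
by apply/ffunP=> c; rewrite ffunE; apply: invmx_eq; exact: mulmx1C.
Qed.

Lemma oneT_aut : oneT Q \in AutQ Q.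
Proof.
by rewrite inE oneT_end; apply/existsP; exists (oneT Q); rewrite oneT_end mul1T eqxx.
Qed.

Lemma mulT_aut g h : g \in AutQ Q -> h \in AutQ Q -> mulT g h \in AutQ Q.
Proof.
move=> /autQP[gE giE gU] /autQP[hE hiE hU].
rewrite inE mulT_end //=; apply/existsP; exists (mulT (invT h) (invT g)).
rewrite mulT_end //= -mulTA [mulT h _]mulTA mulTV // mul1T mulTV //.
by rewrite -mulTA [mulT (invT g) _]mulTA mulVT // mul1T mulVT // !eqxx.
Qed.

Lemma invT_aut g : g \in AutQ Q -> invT g \in AutQ Q.
Proof.
move=> /autQP[gE giE gU]; rewrite inE giE; apply/existsP; exists g.
by rewrite gE mulVT // mulTV // !eqxx.
Qed.

Lemma subAut_unit H g : isSubgroupAut H -> g \in H -> forall c, g c \in unitmx.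
Proof. by case=> sHA _ _ _ gH; case/autQP: (subsetP sHA g gH). Qed.

Lemma conjTM g h Y : (forall c, g c \in unitmx) -> (forall c, h c \in unitmx) ->
  conjT (mulT g h) Y = conjT g (conjT h Y).
Proof.
move=> gU hU; apply/ffunP=> c; rewrite !ffunE.
have -> : invmx (h c *m g c) = invmx (g c) *m invmx (h c).
  by apply: invmx_eq; rewrite -mulmxA (mulmxA (g c)) mulmxV // mul1mx mulmxV.
by rewrite !mulmxA.
Qed.

Lemma conj1T Y : conjT (oneT Q) Y = Y.
Proof. by apply/ffunP=> c; rewrite !ffunE invmx1 mul1mx mulmx1. Qed.

Lemma conjT_end g Y : g \in AutQ Q -> Y \in EndQ Q -> conjT g Y \in EndQ Q.
Proof.
move=> /autQP[gE giE _] YE.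
have -> : conjT g Y = mulT g (mulT Y (invT g)) by apply/ffunP=> c; rewrite !ffunE.
by rewrite !mulT_end.
Qed.

Lemma actIM (a b : qV Q) g h R : (forall c, g c \in unitmx) -> (forall c, h c \in unitmx) ->
  @actI F Q a b (mulT g h) R = actI g (actI h R).
Proof.
move=> gU hU; rewrite /actI !ffunE.
have -> : invmx (h a *m g a) = invmx (g a) *m invmx (h a).
  by apply: invmx_eq; rewrite -mulmxA (mulmxA (g a)) mulmxV // mul1mx mulmxV.
by rewrite !mulmxA.
Qed.

Lemma actI1 (a b : qV Q) R : @actI F Q a b (oneT Q) R = R.
Proof. by rewrite /actI !ffunE invmx1 mul1mx mulmx1. Qed.

Lemma burnside_subAut (G : {set tupleT Q}) (T : finType) (act : tupleT Q -> T -> T)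
    (S : {set T}) :
  isSubgroupAut G ->
  (forall g h x, g \in G -> h \in G -> x \in S -> act (mulT g h) x = act g (act h x)) ->
  (forall x, x \in S -> act (oneT Q) x = x) ->
  (forall g x, g \in G -> x \in S -> act g x \in S) ->
  (norbits G act S * #|G| = \sum_(g in G) #|[set x in S | act g x == x]|)%N.
Proof.
move=> subG actM act1 actS; have [_ G1 GM GV] := subG.
apply: (burnside (mul := @mulT F Q) (inv := @invT F Q) (one := oneT Q)) => //.
- by move=> *; exact: mulTA.
- by move=> *; exact: mul1T.
- by move=> g gG; apply: mulVT; exact: subAut_unit subG gG.
- by move=> g gG; apply: mulTV; exact: subAut_unit subG gG.
Qed.
End QuiverGroup.

(* (r, s) splits the sequence F^ma -i-> F^(ma+mb) -p-> F^mb: the matrix with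
   rows (i; s) is invertible with inverse (r, p). *)
Definition is_splitting (F : fieldType) ma mb (i : 'M[F]_(ma, ma + mb))
    (p : 'M[F]_(ma + mb, mb)) (r : 'M[F]_(ma + mb, ma)) (s : 'M[F]_(mb, ma + mb)) :=
  [/\ i *m r = 1%:M, i *m p = 0, s *m r = 0, s *m p = 1%:M & r *m i + p *m s = 1%:M].

Lemma ses_split (F : fieldType) ma mb (i : 'M[F]_(ma, ma + mb)) (p : 'M[F]_(ma + mb, mb)) :
  row_free i -> row_full p -> (i == kermx p)%MS -> exists r s, is_splitting i p r s.
Proof.
move=> i_free p_full /andP[i_ker ker_i]; have [s sp] := row_fullP p_full.
have ip : i *m p = 0 by apply/sub_kermxP.
have im_ps : (1%:M - p *m s <= i)%MS.
  apply: submx_trans ker_i; apply/sub_kermxP.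
  by rewrite mulmxBl mul1mx -mulmxA sp mulmx1 subrr.
pose r := (1%:M - p *m s) *m pinvmx i.
have ri : r *m i = 1%:M - p *m s by rewrite /r mulmxKpV.
exists r, s; split=> //; last by rewrite ri subrK.
  apply: (row_free_inj i_free).
  by rewrite -mulmxA ri mul1mx mulmxBr mulmx1 mulmxA ip mul0mx subr0.
apply: (row_free_inj i_free).
by rewrite -mulmxA ri mul0mx mulmxBr mulmx1 mulmxA sp mul1mx subrr.
Qed.

(* Block coordinates for a split short exact sequence: the endomorphisms Y of
   F^(ma+mb) preserving the image of i are exactly the matrices
   [[A, 0], [B, D]] in the basis given by the splitting, with
   i Y = A i, Y p = p D and B = s Y r. *)
Section BlockCoordinates.
Variables (F : fieldType) (ma mb : nat).
Variables (i : 'M[F]_(ma, ma + mb)) (p : 'M[F]_(ma + mb, mb))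
  (r : 'M[F]_(ma + mb, ma)) (s : 'M[F]_(mb, ma + mb)).
Hypothesis split : is_splitting i p r s.

Let ir : i *m r = 1%:M. Proof. by case: split. Qed.
Let ip : i *m p = 0. Proof. by case: split. Qed.
Let sr : s *m r = 0. Proof. by case: split. Qed.
Let sp : s *m p = 1%:M. Proof. by case: split. Qed.
Let rips : r *m i + p *m s = 1%:M. Proof. by case: split. Qed.

Definition blockEnd (A : 'M[F]_ma) (B : 'M[F]_(mb, ma)) (D : 'M[F]_mb) : 'M[F]_(ma + mb) :=
  r *m A *m i + p *m B *m i + p *m D *m s.

Let irK k (M : 'M[F]_(k, ma)) : M *m i *m r = M.
Proof. by rewrite -mulmxA ir mulmx1. Qed.
Let ip0 k (M : 'M[F]_(k, ma)) : M *m i *m p = 0.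
Proof. by rewrite -mulmxA ip mulmx0. Qed.
Let sr0 k (M : 'M[F]_(k, mb)) : M *m s *m r = 0.
Proof. by rewrite -mulmxA sr mulmx0. Qed.
Let spK k (M : 'M[F]_(k, mb)) : M *m s *m p = M.
Proof. by rewrite -mulmxA sp mulmx1. Qed.

Lemma blockEndM A B D A' B' D' :
  blockEnd A B D *m blockEnd A' B' D' = blockEnd (A *m A') (B *m A' + D *m B') (D *m D').
Proof.
rewrite /blockEnd !mulmxDr !mulmxDl !mulmxA !irK !ip0 !sr0 !spK !mul0mx !addr0 !add0r.
by rewrite !addrA.
Qed.

Lemma blockEnd1 : blockEnd 1%:M 0 1%:M = 1%:M.
Proof. by rewrite /blockEnd !mulmx1 mulmx0 mul0mx addr0. Qed.

Lemma blockEndV A B D : A \in unitmx -> D \in unitmx ->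
  invmx (blockEnd A B D) = blockEnd (invmx A) (- (invmx D *m B *m invmx A)) (invmx D).
Proof.
move=> Au Du; apply: invmx_eq; rewrite blockEndM !mulmxV // mulmxN !mulmxA mulmxV //.
by rewrite mul1mx subrr blockEnd1.
Qed.

Lemma blockEnd_i A B D : i *m blockEnd A B D = A *m i.
Proof. by rewrite /blockEnd !mulmxDr !mulmxA ir mul1mx ip !mul0mx !addr0. Qed.

Lemma blockEnd_p A B D : blockEnd A B D *m p = p *m D.
Proof. by rewrite /blockEnd !mulmxDl ip0 spK ip0 !add0r. Qed.

Lemma blockEnd_off A B D : s *m blockEnd A B D *m r = B.
Proof.
rewrite /blockEnd !mulmxDr !mulmxDl !mulmxA sr !mul0mx !add0r sp mul1mx irK sr0.
by rewrite addr0.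
Qed.

Lemma blockEnd_inj A B D A' B' D' :
  blockEnd A B D = blockEnd A' B' D' -> [/\ A = A', B = B' & D = D'].
Proof.
move=> eqY; split.
- by rewrite -[A]irK -(blockEnd_i A B D) eqY blockEnd_i irK.
- by rewrite -(blockEnd_off A B D) eqY blockEnd_off.
- by rewrite -[D]mul1mx -sp -mulmxA -(blockEnd_p A B D) eqY blockEnd_p mulmxA sp mul1mx.
Qed.

Lemma blockEndP Y A D : i *m Y = A *m i -> Y *m p = p *m D -> Y = blockEnd A (s *m Y *m r) D.
Proof.
move=> iY Yp.
have Y_split : Y = Y *m r *m i + p *m D *m s.
  by rewrite -[LHS]mulmx1 -rips mulmxDr !mulmxA Yp.
have Yr_split : Y *m r = r *m A + p *m (s *m Y *m r).
  by rewrite -[LHS]mul1mx -rips mulmxDl -!mulmxA (mulmxA i) iY -mulmxA ir mulmx1 !mulmxA.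
by rewrite /blockEnd {1}Y_split Yr_split mulmxDl !mulmxA.
Qed.
End BlockCoordinates.

Section Omega.
Variables (F : finFieldType) (Q : quiverRep F) (a b : qV Q).
Local Notation ma := (qdim a).
Local Notation mb := (qdim b).
Variables (i : 'M[F]_(ma, ma + mb)) (p : 'M[F]_(ma + mb, mb)).
Local Notation Om := (Omega i p).

Definition extT (h : tupleT Q) (M : 'M[F]_(ma + mb)) : tupleT Om :=
  [ffun c : option (qV Q) => match c return 'M[F]_(om_dim a b c) with
                             | Some c' => h c' | None => M end].

Lemma extT_Some h M c : extT h M (Some c) = h c.
Proof. by rewrite ffunE. Qed.

Lemma extT_None h M : extT h M None = M.
Proof. by rewrite ffunE. Qed.

Lemma piOm_ext h M : piOm (extT h M) = h.
Proof. by apply/ffunP=> c; rewrite !ffunE. Qed.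

Lemma extT_eta (Y : tupleT Om) : Y = extT (piOm Y) (Y None).
Proof. by apply/ffunP=> -[c|]; rewrite !ffunE. Qed.

Lemma endOmP (Y : tupleT Om) : (Y \in EndQ Om) =
  [&& piOm Y \in EndQ Q, Y (Some a) *m i == i *m Y None & Y None *m p == p *m Y (Some b)].
Proof.
rewrite !inE; apply/forallP/and3P=> [endY|[/forallP endY ? ?]].
  split; [apply/forallP=> e; rewrite !ffunE; exact: (endY (inl e)) |
         exact: (endY (inr true)) | exact: (endY (inr false))].
by case=> [e|[]] //=; have := endY e; rewrite !ffunE.
Qed.

Lemma piOm_mul (g h : tupleT Om) : piOm (mulT g h) = mulT (piOm g) (piOm h).
Proof. by apply/ffunP=> c; rewrite !ffunE. Qed.

Lemma piOm_inv (g : tupleT Om) : piOm (invT g) = invT (piOm g).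
Proof. by apply/ffunP=> c; rewrite !ffunE. Qed.

Lemma piOm_one : piOm (oneT Om) = oneT Q.
Proof. by apply/ffunP=> c; rewrite !ffunE. Qed.

Lemma piOm_conj (g h : tupleT Om) : piOm (conjT g h) = conjT (piOm g) (piOm h).
Proof. by apply/ffunP=> c; rewrite !ffunE. Qed.

Lemma liftGroup_sub (H : {set tupleT Q}) : isSubgroupAut H -> isSubgroupAut (liftGroup i p H).
Proof.
case=> sHA H1 HM HV; split.
- by apply/subsetP=> g; rewrite inE => /andP[].
- by rewrite inE oneT_aut piOm_one H1.
- by move=> g h /setIdP[gA gH] /setIdP[hA hH]; rewrite inE mulT_aut // piOm_mul HM.
- by move=> g /setIdP[gA gH]; rewrite inE invT_aut // piOm_inv HV.
Qed.
End Omega.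

Arguments extT {F Q a b i p} h M.
Arguments piOm_ext {F Q a b i p} h M.

Section LiftCount.
Variables (F : finFieldType) (Q : quiverRep F) (a b : qV Q).
Local Notation ma := (qdim a).
Local Notation mb := (qdim b).
Variables (i : 'M[F]_(ma, ma + mb)) (p : 'M[F]_(ma + mb, mb))
  (r : 'M[F]_(ma + mb, ma)) (s : 'M[F]_(mb, ma + mb)).
Hypothesis split : is_splitting i p r s.
Local Notation Om := (Omega i p).
Local Notation blockEnd := (blockEnd i p r s).

Variables (X : tupleT Q) (H : {set tupleT Q}).
Hypotheses (HX : X \in EndQ Q) (HH : isSubgroupAut H)
  (Hfix : forall g, g \in H -> conjT g X = X).

Definition liftAut (h : tupleT Q) (K : 'M[F]_(mb, ma)) : tupleT Om :=
  extT h (blockEnd (h a) K (h b)).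

Definition liftEnd (C : 'M[F]_(mb, ma)) : tupleT Om := extT X (blockEnd (X a) C (X b)).

Lemma H_unit h c : h \in H -> h c \in unitmx.
Proof. by move=> hH; exact: subAut_unit HH hH c. Qed.

Lemma H_fix h c : h \in H -> invmx (h c) *m (X c *m h c) = X c.
Proof.
by move=> hH; have := congr1 (fun t : tupleT Q => t c) (Hfix hH); rewrite ffunE mulmxA.
Qed.

Lemma liftAutM h K h' K' :
  mulT (liftAut h K) (liftAut h' K') = liftAut (mulT h h') (K' *m h a + h' b *m K).
Proof. by apply/ffunP=> -[c|]; rewrite !ffunE // (blockEndM split). Qed.

Lemma liftAut_end h K : h \in H -> liftAut h K \in EndQ Om.
Proof.
move=> hH; have [sHA _ _ _] := HH; have [hE _ _] := autQP (subsetP sHA h hH).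
rewrite endOmP piOm_ext !extT_Some !extT_None (blockEnd_i split) (blockEnd_p split).
by rewrite hE !eqxx.
Qed.

Lemma liftAut_aut h K : h \in H -> liftAut h K \in AutQ Om.
Proof.
move=> hH; have [_ _ _ HV] := HH.
rewrite inE liftAut_end //=; apply/existsP.
exists (liftAut (invT h) (- (invmx (h b) *m K *m invmx (h a)))).
rewrite liftAut_end ?HV //= !liftAutM mulTV ?mulVT => [|c|c]; try exact: H_unit.
rewrite !ffunE mulNmx -!mulmxA mulVmx ?H_unit // mulmx1 addNr mulmxN !mulmxA.
rewrite mulmxV ?H_unit // mul1mx addrN.
suff -> : liftAut (oneT Q) 0 = oneT Om by rewrite eqxx.
by apply/ffunP=> -[c|]; rewrite !ffunE // (blockEnd1 split).
Qed.

Lemma endOm_coord (Y : tupleT Om) : Y \in EndQ Om ->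
  Y = extT (piOm Y) (blockEnd (piOm Y a) (s *m Y None *m r) (piOm Y b)).
Proof.
rewrite endOmP => /and3P[_ /eqP iY /eqP Yp].
by rewrite {1}(extT_eta Y); congr extT; apply: (blockEndP split); rewrite ?ffunE ?iY ?Yp.
Qed.

Lemma liftGroupE :
  liftGroup i p H = [set liftAut hK.1 hK.2 | hK in setX H [set: 'M[F]_(mb, ma)]].
Proof.
apply/setP=> g; rewrite inE; apply/andP/imsetP=> [[gA gH]|[[h K] /setXP[hH _] ->]].
  exists (piOm g, s *m g None *m r); first by rewrite in_setX gH inE.
  by apply: endOm_coord; case/autQP: gA.
by rewrite liftAut_aut // piOm_ext.
Qed.

Lemma liftAut_inj : injective (fun hK => liftAut hK.1 hK.2).
Proof.
move=> [h K] [h' K'] /= eqg.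
have -> : h = h' by have := congr1 (fun t : tupleT Om => piOm t) eqg; rewrite /liftAut !piOm_ext.
have := congr1 (fun t : tupleT Om => t None) eqg; rewrite /= !ffunE.
by case/(blockEnd_inj split) => _ ->.
Qed.

Lemma card_liftGroup : #|liftGroup i p H| = (#|H| * #|F| ^ (mb * ma))%N.
Proof. by rewrite liftGroupE card_imset ?cardsX ?cardsT ?card_mx //; exact: liftAut_inj. Qed.

Lemma fibreE : fibre i p X = [set liftEnd C | C : 'M[F]_(mb, ma)].
Proof.
apply/setP=> Y; rewrite inE; apply/andP/imsetP=> [[YE /eqP YX]|[C _ ->]].
  by exists (s *m Y None *m r) => //; rewrite /liftEnd {1}(endOm_coord YE) YX.
rewrite /liftEnd piOm_ext eqxx endOmP piOm_ext !extT_Some !extT_None.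
by rewrite (blockEnd_i split) (blockEnd_p split) ?HX ?eqxx.
Qed.

Lemma liftEnd_inj : injective liftEnd.
Proof.
move=> C C' eqY; have := congr1 (fun t : tupleT Om => t None) eqY; rewrite /= !ffunE.
by case/(blockEnd_inj split).
Qed.

(* Conjugation in coordinates: since h fixes X, conjugating liftEnd C by
   liftAut h K only changes the off-diagonal block. *)
Lemma conj_liftAut h K C : h \in H ->
  conjT (liftAut h K) (liftEnd C) = liftEnd (invmx (h b) *m (C *m h a + X b *m K - K *m X a)).
Proof.
move=> hH; apply/ffunP=> -[c|]; rewrite !ffunE; first by rewrite -mulmxA H_fix.
rewrite (blockEndV split) ?H_unit // !(blockEndM split) -!mulmxA !H_fix //; congr blockEnd.
rewrite !mulmxDl !mulNmx -!mulmxA H_fix // !mulmxDr mulmxN.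
by rewrite [RHS]addrC addrA.
Qed.

Lemma liftAut_fix h K C : h \in H ->
  (conjT (liftAut h K) (liftEnd C) == liftEnd C) = (X b *m K - K *m X a == h b *m C - C *m h a).
Proof.
move=> hH; have hbU := H_unit b hH.
rewrite conj_liftAut // (inj_eq liftEnd_inj); apply/eqP/eqP=> eqC.
  by rewrite -{1}eqC mulKVmx // addrAC [C *m h a + _]addrC addrK.
by rewrite -addrA eqC addrCA subrr addr0 mulKmx.
Qed.

Lemma card_fix_liftAut h K : h \in H ->
  #|[set Y in fibre i p X | conjT (liftAut h K) Y == Y]| =
  #|[set C | X b *m K - K *m X a == h b *m C - C *m h a]|.
Proof.
move=> hH; rewrite fibreE -(card_in_imset (in2W liftEnd_inj)); apply: eq_card => Y.
rewrite !inE; apply/andP/imsetP=> [[/imsetP[C _ ->] fixC]|[C]].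
  by exists C => //; rewrite inE -liftAut_fix.
by rewrite inE -liftAut_fix // => fixC ->; split; [apply/imsetP; exists C|].
Qed.

Lemma actI_Iset h R : h \in H -> R \in Iset X a b -> actI h R \in Iset X a b.
Proof.
move=> hH; rewrite !inE /actI => /eqP XR.
have Xa_ha : X a *m invmx (h a) = invmx (h a) *m X a.
  by rewrite -{1}(H_fix a hH) -!mulmxA mulmxV ?H_unit // mulmx1.
have hb_Xb : h b *m X b = X b *m h b.
  by rewrite -{1}(H_fix b hH) mulmxA mulmxV ?H_unit // mul1mx.
by rewrite !mulmxA Xa_ha -(mulmxA _ (X a)) XR -!mulmxA hb_Xb.
Qed.

Lemma conjT_fibre g Y : g \in liftGroup i p H -> Y \in fibre i p X -> conjT g Y \in fibre i p X.
Proof.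
move=> /setIdP[gA gH] /setIdP[YE /eqP YX].
by rewrite inE conjT_end //= piOm_conj YX Hfix.
Qed.

Let q_pow_gt0 k : (0 < #|F| ^ k)%N.
Proof. by rewrite expn_gt0; apply/orP; left; apply/card_gt0P; exists 0. Qed.

(* For fixed h, the pairs (K, C) with X_b K - K X_a = h_b C - C h_a are the
   coincidences of two Sylvester operators; by duality for the trace form
   they are counted by the intertwiners R in I(X_a, X_b) fixed by h. *)
Lemma sum_card_fix h : h \in H ->
  (\sum_(K : 'M[F]_(mb, ma)) #|[set C | (X b *m K - K *m X a == h b *m C - C *m h a)%R]|
   = #|[set R in Iset X a b | actI h R == R]| * #|F| ^ (mb * ma))%N.
Proof.
move=> hH; rewrite -card_pairs.
pose L1 := sylvester (X b) (X a); pose L2 := sylvester (h b) (h a).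
have vec_bij : bijective (fun KC : 'M[F]_(mb, ma) * 'M[F]_(mb, ma) => (mxvec KC.1, mxvec KC.2)).
  exists (fun x : 'rV_(mb * ma) * 'rV_(mb * ma) => (vec_mx x.1, vec_mx x.2)).
    by move=> [K C]; rewrite /= !mxvecK.
  by move=> [x y]; rewrite /= !vec_mxK.
have trvec_bij : bijective (fun R : 'M[F]_(ma, mb) => mxvec R^T).
  by exists (fun u => (vec_mx u)^T) => [R|u]; rewrite ?mxvecK ?trmxK ?vec_mxK.
have pairsE : #|[set KC : 'M[F]_(mb, ma) * 'M[F]_(mb, ma) |
                  X b *m KC.1 - KC.1 *m X a == h b *m KC.2 - KC.2 *m h a]|
             = #|[set x : 'rV_(mb * ma) * 'rV_(mb * ma) | x.1 *m L1 == x.2 *m L2]|.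
  rewrite (card_bij_pred (fun x : 'rV_(mb * ma) * 'rV_(mb * ma) => x.1 *m L1 == x.2 *m L2)
             vec_bij).
  by apply: eq_card => -[K C]; rewrite !inE /= !sylvesterE (can_eq mxvecK).
have fixE : #|[set R in Iset X a b | actI h R == R]|
            = #|[set u : 'rV_(mb * ma) | (u *m L1^T == 0) && (u *m L2^T == 0)]|.
  rewrite (card_bij_pred (fun u : 'rV_(mb * ma) => (u *m L1^T == 0) && (u *m L2^T == 0))
             trvec_bij).
  apply: eq_card => R; rewrite !inE !sylvester_tr_ker eq_sym; congr (_ && _).
  rewrite /actI; apply/eqP/eqP=> [fixR|intertw].
    by rewrite -{2}fixR !mulmxA mulmxV ?H_unit // mul1mx.
  by rewrite -mulmxA intertw mulKmx ?H_unit.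
rewrite pairsE fixE; apply/eqP.
by rewrite -(eqn_pmul2r (q_pow_gt0 (mb * ma))) -mulnA -expnD card_coincidences.
Qed.

Lemma sum_fix_liftGroup :
  (\sum_(g in liftGroup i p H) #|[set Y in fibre i p X | conjT g Y == Y]|
   = \sum_(h in H) #|[set R in Iset X a b | actI h R == R]| * #|F| ^ (mb * ma))%N.
Proof.
rewrite liftGroupE big_imset /=; last by move=> x y _ _; exact: liftAut_inj.
rewrite (eq_bigl (fun hK => (hK.1 \in H) && predT hK.2)) => [|[h K]]; last first.
  by rewrite in_setX inE andbT.
rewrite -(pair_big (mem H) predT
           (fun h K => #|[set Y in fibre i p X | conjT (liftAut h K) Y == Y]|)) /=.
apply: eq_bigr => h hH; rewrite -sum_card_fix //.
by apply: eq_bigr => K _; rewrite card_fix_liftAut.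
Qed.

(* The orbit counts agree: Burnside on both sides, then cancel |H^{Q'}|. *)
Lemma norbits_lift :
  norbits (liftGroup i p H) (@conjT F Om) (fibre i p X) = norbits H (@actI F Q a b) (Iset X a b).
Proof.
have liftH := liftGroup_sub i p HH; have [_ H1 _ _] := HH.
have lift_gt0 : (0 < #|H| * #|F| ^ (mb * ma))%N.
  by rewrite muln_gt0 q_pow_gt0 andbT; apply/card_gt0P; exists (oneT Q).
have burnside_lift := burnside_subAut (act := @conjT F Om) (S := fibre i p X) liftH.
have burnside_H := burnside_subAut (act := @actI F Q a b) (S := Iset X a b) HH.
apply/eqP; rewrite -(eqn_pmul2r lift_gt0) -{1}card_liftGroup.
rewrite burnside_lift ?sum_fix_liftGroup -?big_distrl /= ?mulnA -?burnside_H //.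
- by move=> g h R gH hH _; apply: actIM => c; exact: H_unit.
- by move=> R _; exact: actI1.
- by move=> *; exact: actI_Iset.
- by move=> g h Y gL hL _; apply: (@conjTM _ Om) => c; exact: subAut_unit liftH _ _.
- by move=> Y _; exact: (@conj1T _ Om).
- by move=> *; exact: conjT_fibre.
Qed.
End LiftCount.

Unset Implicit Arguments.

Theorem mainTheorem9 (F : finFieldType) (Q : quiverRep F) (a b : qV Q)
  (i : 'M[F]_(@qdim _ Q a, @qdim _ Q a + @qdim _ Q b))
  (p : 'M[F]_(@qdim _ Q a + @qdim _ Q b, @qdim _ Q b))
  (i_inj : row_free i) (p_surj : row_full p) (exact : (i == kermx p)%MS)
  (X : tupleT Q) (HX : X \in EndQ Q)
  (H : {set tupleT Q}) (HH : isSubgroupAut H)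
  (Hfix : forall g, g \in H -> conjT g X = X) :
  norbits (liftGroup i p H) (@conjT F (Omega i p)) (fibre i p X)
  = norbits H (@actI F Q a b) (Iset X a b).
Proof.
have [r [s split]] := ses_split i_inj p_surj exact.
exact: (norbits_lift split HX HH Hfix).
Qed.
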